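(* Let $p\in[0,1]^N$. If $i\in\{\tilde k+1,\dots,N\}$, then $B^{\mathcal N}_{1:i}\le i-1$. In particular, if $\tilde k\le N-1$, then $B^{\mathcal N}_{1:\tilde k+1}=\tilde k$.
   Context: $q\in(0,1)$, $N\ge1$. Bins $B_i=\{x:(i-1)q/N\le x<iq/N\}$ for $i=1,\dots,N$. $B^{\mathcal N}_{1:i}=|\{j\in\{1,\dots,N\}:0\le p_j<iq/N\}|$ (with $B^{\mathcal N}_{1:0}=0$), and $\tilde k=\max\{i\in\{0,\dots,N\}:B^{\mathcal N}_{1:i}=i\}$ is the Benjamini–Hochberg rejection count. *)

From mathcomp Require Import all_boot all_order all_algebra.
Set Implicit Arguments. Unset Strict Implicit. Unset Printing Implicit Defensive.
Import Order.TTheory GRing.Theory Num.Theory.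
Local Open Scope ring_scope.

Definition Bcount (R : realFieldType) (N : nat) (q : R) (p : 'I_N -> R) (i : nat) : nat :=
  #|[set j : 'I_N | (0 <= p j) && (p j < i%:R * q / N%:R)]|.

(* k~ = max { i in {0..N} : B^N_{1:i} = i }  (i = 0 always qualifies) *)
Definition ktilde (R : realFieldType) (N : nat) (q : R) (p : 'I_N -> R) : nat :=
  (\max_(i < N.+1 | Bcount q p i == i) i)%N.

From mathcomp Require Import all_boot all_order all_algebra.
Set Implicit Arguments. Unset Strict Implicit. Unset Printing Implicit Defensive.
Import Order.TTheory GRing.Theory Num.Theory.
Local Open Scope ring_scope.

(* i |-> B_{1:i} is a nondecreasing map of {0..N} into itself; above its largest
   fixed point k~ it cannot jump over the diagonal, and since B_{1:N} <= N it must
   stay strictly below it.  So B_{1:i} < i for k~ < i <= N, and then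
   k~ = B_{1:k~} <= B_{1:k~+1} <= k~. *)

Lemma fixpoint_free_homo_lt (f : nat -> nat) (k N : nat) :
  {homo f : i j / (i <= j)%N} -> (f N <= N)%N ->
  (forall i, (k < i <= N)%N -> f i != i) ->
  forall i, (k < i <= N)%N -> (f i < i)%N.
Proof.
move=> f_homo fN_le nofix i; move Ed: (N - i)%N => d.
elim: d i Ed => [|d IHd] i Ed /andP[k_lt_i i_le_N].
  have i_eq_N : i = N by apply/eqP; rewrite eqn_leq i_le_N -subn_eq0 Ed.
  by rewrite ltn_neqAle nofix ?k_lt_i ?i_le_N //= i_eq_N.
have fSi_lt : (f i.+1 < i.+1)%N.
  by apply: IHd; [rewrite subnS Ed | rewrite ltnW //= -subn_gt0 Ed].
rewrite ltn_neqAle nofix ?k_lt_i ?i_le_N //=.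
by rewrite -ltnS (leq_ltn_trans (f_homo _ _ (leqnSn i))).
Qed.

Section BHRejectionCount.

Variables (R : realFieldType) (N : nat) (q : R) (p : 'I_N -> R).

Lemma Bcount0 : Bcount q p 0 = 0%N.
Proof.
apply/eqP; rewrite cards_eq0; apply/eqP/setP => j.
by rewrite !inE !mul0r; case: leP.
Qed.

Lemma Bcount_le i : (Bcount q p i <= N)%N.
Proof. by rewrite -[X in (_ <= X)%N](card_ord N) max_card. Qed.

Lemma le_Bcount : 0 <= q -> {homo Bcount q p : i j / (i <= j)%N}.
Proof.
move=> q_ge0 i j i_le_j; apply/subset_leq_card/subsetP => x.
rewrite !inE => /andP[-> px_lt] /=; apply: (lt_le_trans px_lt).
by rewrite ler_wpM2r ?invr_ge0 ?ler0n // ler_wpM2r // ler_nat.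
Qed.

Lemma Bcount_ktilde : Bcount q p (ktilde q p) = ktilde q p.
Proof.
have [|i i_fix k_eq] := @eq_bigmax_cond _ (fun i : 'I_N.+1 => Bcount q p i == i) val.
  by apply/card_gt0P; exists ord0; rewrite unfold_in /= Bcount0.
have -> : ktilde q p = i by exact: k_eq.
exact/eqP.
Qed.

Lemma Bcount_neq_gt_ktilde i : (ktilde q p < i <= N)%N -> Bcount q p i != i.
Proof.
case/andP=> k_lt_i i_le_N; apply: contraTneq k_lt_i => i_fix.
rewrite -leqNgt (@leq_bigmax_cond _ (fun i : 'I_N.+1 => Bcount q p i == i)
  val (Ordinal (i_le_N : (i < N.+1)%N))) //=.
by rewrite i_fix.
Qed.

End BHRejectionCount.

Theorem lemma3 (R : realFieldType) (N : nat) (q : R) (p : 'I_N -> R) :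
  (0 < q < 1) -> (1 <= N)%N ->
  (forall j, 0 <= p j <= 1) ->
  (forall i : nat, (ktilde q p < i <= N)%N -> (Bcount q p i <= i.-1)%N) /\
  ((ktilde q p <= N.-1)%N -> Bcount q p (ktilde q p).+1 = ktilde q p).
Proof.
move=> /andP[q_gt0 _] N_gt0 _.
have B_homo := le_Bcount p (ltW q_gt0).
have B_lt i : (ktilde q p < i <= N)%N -> (Bcount q p i < i)%N.
  apply: fixpoint_free_homo_lt B_homo (Bcount_le q p N) _ i.
  exact: Bcount_neq_gt_ktilde.
split=> [i /andP[k_lt_i i_le_N] | k_le_predN].
  by rewrite -ltnS prednK ?B_lt ?k_lt_i // (leq_ltn_trans _ k_lt_i).
have kS_range : (ktilde q p < (ktilde q p).+1 <= N)%N.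
  by rewrite ltnSn (leq_ltn_trans k_le_predN) ?ltn_predL.
apply/eqP; rewrite eqn_leq -ltnS B_lt //=.
by rewrite -{1}Bcount_ktilde B_homo.
Qed.
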